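(* Let $a>0$, $D_L>0$, $\ell>0$, and let $v_e:[0,\ell]\to\mathbb R$ be continuous with $a<v_e(x)<2a$ for all $x\in[0,\ell]$. For $\lambda\in\mathbb C$ with $\mathrm{Re}(\lambda)\ge0$ define $$f(x,\lambda)=\frac{(\lambda+1)\,v_e(x)^2}{\lambda-1+2a/v_e(x)}+\lambda .$$ Then $f(x,\lambda)$ is well defined (the denominator is nonzero) and $\mathrm{Re}\,f(x,\lambda)>0$ for all $x\in[0,\ell]$. Moreover, if $\eta\in C^2((0,\ell))\cap C^1([0,\ell])$ is a complex-valued solution of $$D_L\,\eta_{xx}-f(x,\lambda)\,\eta=0\ \text{ on }(0,\ell),\qquad \eta(0)=0,\quad \eta_x(\ell)=0,$$ then $\eta\equiv0$ on $[0,\ell]$; in particular $\eta_x(0)=0$.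
   Context: This is the outer eigenvalue problem arising in the linear stability analysis of Schnakenberg spike equilibria, where $v_e$ is the outer steady-state activator profile. *)

From Coquelicot Require Import Coquelicot.
From Stdlib Require Import Reals.

Open Scope R_scope.

Definition Icc (l x : R) : Prop := 0 <= x <= l.

Definition cont_on_Icc {V : UniformSpace} (l : R) (g : R -> V) : Prop :=
  forall x, Icc l x -> filterlim g (within (Icc l) (locally x)) (locally (g x)).

Definition fdenom (a : R) (ve : R -> R) (x : R) (lam : Complex.C) : Complex.C :=
  (lam - RtoC 1 + RtoC (2 * a / ve x))%C.

Definition fval (a : R) (ve : R -> R) (x : R) (lam : Complex.C) : Complex.C :=
  ((lam + RtoC 1) * RtoC (ve x ^ 2) / fdenom a ve x lam + lam)%C.

From Coquelicot Require Import Coquelicot.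
From Stdlib Require Import Reals Lra Psatz.

(* Re f > 0 is a direct computation, using 2a/v_e > 1.  For the boundary value
   problem, the energy E = Re (eta' conj eta) satisfies
   D_L E' = D_L |eta'|^2 + Re f |eta|^2 >= 0, so E is nondecreasing on (0, l);
   the boundary conditions give E(0) = E(l) = 0, hence E = 0 on (0, l), so
   E' = 0 there, which forces eta = eta' = 0 on (0, l) and, by continuity, on
   [0, l]. *)

Open Scope R_scope.

Lemma Re_fdenom_gt0 a ve x lam :
  0 < a -> a < ve x < 2 * a -> 0 <= Re lam -> 0 < Re (fdenom a ve x lam).
Proof.
  intros ha hv hp.
  assert (hc : 1 < 2 * a / ve x).
  { apply (Rmult_lt_reg_r (ve x)); [lra|]. field_simplify; lra. }
  unfold fdenom, Re in *; simpl; lra.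
Qed.

Lemma Re_fval_gt0 a ve x lam :
  0 < a -> a < ve x < 2 * a -> 0 <= Re lam -> 0 < Re (fval a ve x lam).
Proof.
  intros ha hv hp.
  (* Re ((lam + 1) v^2 / d) = v^2 Re ((lam + 1) conj d) / |d|^2 with Im d = Im lam *)
  pose proof (Re_fdenom_gt0 a ve x lam ha hv hp) as hd.
  unfold fval. unfold fdenom in hd |- *.
  destruct lam as [p q]; simpl in hp, hd |- *.
  set (c := 2 * a / ve x) in *. set (v := ve x) in *.
  set (dr := p + - (1) + c) in *.
  assert (hn : 0 < dr * dr + q * q) by nra.
  replace (_ + _) with (v * v * ((p + 1) * dr + q * q) / (dr * dr + q * q) + p)
    by (unfold dr; field; unfold dr in hn; lra).
  assert (0 < v * v * ((p + 1) * dr + q * q)) by (apply Rmult_lt_0_compat; nra).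
  assert (0 < v * v * ((p + 1) * dr + q * q) / (dr * dr + q * q))
    by (apply Rdiv_lt_0_compat; lra).
  lra.
Qed.

Definition Cdot (z w : Complex.C) : R := Re z * Re w + Im z * Im w.

Lemma Cdot_mull (k z : Complex.C) : Cdot (k * z)%C z = Re k * Cdot z z.
Proof. destruct k, z; unfold Cdot, Re, Im; simpl; ring. Qed.

Lemma Cdot_RtoC_mull (r : R) (z w : Complex.C) : Cdot (RtoC r * z)%C w = r * Cdot z w.
Proof. destruct z, w; unfold Cdot, Re, Im; simpl; ring. Qed.

Lemma Cdot_self_ge0 (z : Complex.C) : 0 <= Cdot z z.
Proof. unfold Cdot; nra. Qed.

Lemma Cdot_self_eq0 (z : Complex.C) : Cdot z z = 0 -> z = RtoC 0.
Proof.
  destruct z as [u w]; unfold Cdot, Re, Im; simpl; intros h.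
  assert (u = 0) by nra. assert (w = 0) by nra. subst; reflexivity.
Qed.

Lemma is_derive_Re (f : R -> Complex.C) x l :
  is_derive (K := R_AbsRing) f x l -> is_derive (fun t => Re (f t)) x (Re l).
Proof.
  intros H. eapply filterdiff_ext_lin.
  - apply (filterdiff_comp' f fst x _ fst H).
    apply (@filterdiff_linear R_AbsRing C_R_NormedModule R_NormedModule).
    apply (@is_linear_fst R_AbsRing R_NormedModule R_NormedModule).
  - reflexivity.
Qed.

Lemma is_derive_Im (f : R -> Complex.C) x l :
  is_derive (K := R_AbsRing) f x l -> is_derive (fun t => Im (f t)) x (Im l).
Proof.
  intros H. eapply filterdiff_ext_lin.
  - apply (filterdiff_comp' f snd x _ snd H).
    apply (@filterdiff_linear R_AbsRing C_R_NormedModule R_NormedModule).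
    apply (@is_linear_snd R_AbsRing R_NormedModule R_NormedModule).
  - reflexivity.
Qed.

Lemma is_derive_Cdot (f g : R -> Complex.C) x df dg :
  is_derive (K := R_AbsRing) f x df -> is_derive (K := R_AbsRing) g x dg ->
  is_derive (fun t => Cdot (f t) (g t)) x (Cdot df (g x) + Cdot (f x) dg).
Proof.
  intros Hf Hg.
  pose proof (is_derive_mult _ _ x _ _ (is_derive_Re f x df Hf)
                (is_derive_Re g x dg Hg) Rmult_comm) as Hre.
  pose proof (is_derive_mult _ _ x _ _ (is_derive_Im f x df Hf)
                (is_derive_Im g x dg Hg) Rmult_comm) as Him.
  pose proof (is_derive_plus _ _ x _ _ Hre Him) as H.
  replace (Cdot df (g x) + Cdot (f x) dg) with
    (plus (plus (mult (Re df) (Re (g x))) (mult (Re (f x)) (Re dg)))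
          (plus (mult (Im df) (Im (g x))) (mult (Im (f x)) (Im dg))));
    [exact H|].
  unfold Cdot, plus, mult; simpl; ring.
Qed.

Lemma filterlim_Cdot {T : Type} (F : (T -> Prop) -> Prop) {FF : Filter F}
    (f g : T -> Complex.C) z w :
  filterlim f F (locally z) -> filterlim g F (locally w) ->
  filterlim (fun t => Cdot (f t) (g t)) F (locally (Cdot z w)).
Proof.
  intros Hf Hg.
  assert (HRe : forall h c, filterlim h F (locally c) ->
            filterlim (fun t => Re (h t)) F (locally (Re c))).
  { intros h [c1 c2] H. apply (filterlim_comp _ _ _ h fst F _ _ H).
    apply (@continuous_fst R_UniformSpace R_UniformSpace). }
  assert (HIm : forall h c, filterlim h F (locally c) ->
            filterlim (fun t => Im (h t)) F (locally (Im c))).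
  { intros h [c1 c2] H. apply (filterlim_comp _ _ _ h snd F _ _ H).
    apply (@continuous_snd R_UniformSpace R_UniformSpace). }
  assert (Hmul : forall u v (c d : R), filterlim u F (locally c) ->
            filterlim v F (locally d) ->
            filterlim (fun t => u t * v t) F (locally (c * d))).
  { intros u v c d Hu Hv.
    exact (filterlim_comp_2 _ _ _ Hu Hv (@filterlim_mult R_AbsRing c d)). }
  exact (filterlim_comp_2 _ _ _ (Hmul _ _ _ _ (HRe _ _ Hf) (HRe _ _ Hg))
           (Hmul _ _ _ _ (HIm _ _ Hf) (HIm _ _ Hg))
           (@filterlim_plus R_AbsRing R_NormedModule _ _)).
Qed.

Lemma nondecreasing_of_derive_ge0 (f df : R -> R) (a b : R) :
  (forall x, a < x < b -> is_derive f x (df x)) ->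
  (forall x, a < x < b -> 0 <= df x) ->
  forall x y, a < x -> x <= y -> y < b -> f x <= f y.
Proof.
  intros Hd Hpos x y Hx Hxy Hy.
  destruct (MVT_gen f x y df) as [c [Hc Heq]];
    rewrite ?Rmin_left, ?Rmax_right in * by lra.
  - intros z Hz; apply Hd; lra.
  - intros z Hz; apply continuity_pt_filterlim, (ex_derive_continuous f).
    exists (df z); apply Hd; lra.
  - assert (0 <= df c) by (apply Hpos; lra). nra.
Qed.

Lemma derive_eq0_of_Ioo_eq0 (f : R -> R) (a b x df : R) :
  (forall t, a < t < b -> f t = 0) -> a < x < b -> is_derive f x df -> df = 0.
Proof.
  intros Hf Hx Hd.
  assert (Hr : 0 < Rmin (x - a) (b - x)) by (apply Rmin_glb_lt; lra).
  assert (Hloc : locally x (fun t => 0 = f t)).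
  { exists (mkposreal _ Hr); intros t Ht.
    change (Rabs (t - x) < Rmin (x - a) (b - x)) in Ht.
    apply Rabs_def2 in Ht.
    pose proof (Rmin_l (x - a) (b - x)); pose proof (Rmin_r (x - a) (b - x)).
    symmetry; apply Hf; lra. }
  pose proof (is_derive_ext_loc _ _ x _ Hloc (@is_derive_const R_AbsRing R_NormedModule 0 x)).
  rewrite <- (is_derive_unique _ _ _ Hd). now apply is_derive_unique.
Qed.

Definition Ioo (l x : R) : Prop := 0 < x < l.

Lemma Ioo_within_proper (l x0 : R) :
  0 < l -> Icc l x0 -> ProperFilter' (within (Ioo l) (locally x0)).
Proof.
  intros hl hx; split; [|apply within_filter, locally_filter].
  intros [eps Heps]; unfold Icc in hx.
  assert (he := cond_pos eps).
  set (s := Rmin 1 (eps / l) / 2).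
  assert (hs1 : 0 < s) by
    (unfold s; apply Rdiv_lt_0_compat; [apply Rmin_glb_lt|]; try apply Rdiv_lt_0_compat; lra).
  assert (hs2 : s * l <= eps / 2).
  { pose proof (Rmin_r 1 (eps / l)) as hmin.
    apply (Rmult_le_compat_r l) in hmin; [|lra].
    unfold s; field_simplify in hmin; [field_simplify|]; lra. }
  assert (hs3 : s <= 1 / 2) by (unfold s; pose proof (Rmin_l 1 (eps / l)); lra).
  (* a convex combination of x0 and the midpoint l/2, with positive weight on l/2 *)
  apply (Heps (x0 + s * (l / 2 - x0))).
  - change (Rabs (x0 + s * (l / 2 - x0) - x0) < eps).
    replace (x0 + s * (l / 2 - x0) - x0) with (s * (l / 2 - x0)) by ring.
    rewrite Rabs_mult, Rabs_pos_eq by lra.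
    assert (Rabs (l / 2 - x0) <= l / 2) by (apply Rabs_le; lra). nra.
  - unfold Ioo; split; nra.
Qed.

Lemma filterlim_within_Ioo {V : UniformSpace} (l x0 : R) (g : R -> V) (y : V) :
  filterlim g (within (Icc l) (locally x0)) (locally y) ->
  filterlim g (within (Ioo l) (locally x0)) (locally y).
Proof.
  apply filterlim_filter_le_1; intros P HP.
  apply (filter_imp (F := locally x0) (fun t => Icc l t -> P t)); [|exact HP].
  intros t H [h0 hl]; apply H; split; lra.
Qed.

Lemma le_at_Icc_of_Ioo (l x0 : R) (h1 h2 : R -> R) :
  0 < l -> Icc l x0 ->
  filterlim h1 (within (Icc l) (locally x0)) (locally (h1 x0)) ->
  filterlim h2 (within (Icc l) (locally x0)) (locally (h2 x0)) ->
  within (Ioo l) (locally x0) (fun t => h1 t <= h2 t) -> h1 x0 <= h2 x0.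
Proof.
  intros hl hx H1 H2 Hle.
  pose proof (Ioo_within_proper l x0 hl hx).
  apply (filterlim_le h1 h2 (h1 x0) (h2 x0) Hle);
    apply filterlim_within_Ioo; assumption.
Qed.

Lemma eq_zero_at_Icc_of_Ioo {V : NormedModule R_AbsRing} (l x0 : R) (g : R -> V) :
  0 < l -> Icc l x0 ->
  filterlim g (within (Icc l) (locally x0)) (locally (g x0)) ->
  (forall t, Ioo l t -> g t = zero) -> g x0 = zero.
Proof.
  intros hl hx Hg H0.
  pose proof (Ioo_within_proper l x0 hl hx).
  apply (filterlim_locally_unique g); [now apply filterlim_within_Ioo|].
  apply (filterlim_ext_loc (fun _ => zero)); [|apply filterlim_const].
  unfold within; apply filter_forall; intros t ht; symmetry; now apply H0.
Qed.

Lemma nondecreasing_Ioo_between (l : R) (h : R -> R) :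
  0 < l ->
  filterlim h (within (Icc l) (locally 0)) (locally (h 0)) ->
  filterlim h (within (Icc l) (locally l)) (locally (h l)) ->
  (forall x y, 0 < x -> x <= y -> y < l -> h x <= h y) ->
  forall y, Ioo l y -> h 0 <= h y <= h l.
Proof.
  intros hl H0 Hl Hmono y [hy0 hyl].
  assert (I0 : Icc l 0) by (unfold Icc; lra).
  assert (Il : Icc l l) by (unfold Icc; lra).
  assert (hy0' : 0 < y) by lra. assert (hyl' : 0 < l - y) by lra.
  split.
  - apply (le_at_Icc_of_Ioo l 0 h (fun _ => h y) hl I0 H0 (filterlim_const _)).
    exists (mkposreal _ hy0'); intros t Ht [ht0 htl].
    change (Rabs (t - 0) < y) in Ht; apply Rabs_def2 in Ht.
    apply Hmono; lra.
  - apply (le_at_Icc_of_Ioo l l (fun _ => h y) h hl Il (filterlim_const _) Hl).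
    exists (mkposreal _ hyl'); intros t Ht [ht0 htl].
    change (Rabs (t - l) < l - y) in Ht; apply Rabs_def2 in Ht.
    apply Hmono; lra.
Qed.

Section MixedBoundaryValueProblem.

Variables (DL l : R) (k eta eta' eta'' : R -> Complex.C).
Hypothesis hDL : 0 < DL.
Hypothesis hl : 0 < l.
Hypothesis hk : forall x, Ioo l x -> 0 < Re (k x).
Hypothesis heta_cont : cont_on_Icc l eta.
Hypothesis heta' : forall x, Ioo l x -> is_derive (K := R_AbsRing) eta x (eta' x).
Hypothesis heta'_cont : cont_on_Icc l eta'.
Hypothesis heta'' : forall x, Ioo l x -> is_derive (K := R_AbsRing) eta' x (eta'' x).
Hypothesis hode : forall x, Ioo l x -> (RtoC DL * eta'' x - k x * eta x)%C = RtoC 0.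
Hypothesis heta0 : eta 0 = RtoC 0.
Hypothesis heta'l : eta' l = RtoC 0.

Let energy (t : R) : R := Cdot (eta' t) (eta t).

Let energy_deriv (t : R) : R := Cdot (eta'' t) (eta t) + Cdot (eta' t) (eta' t).

Lemma is_derive_energy x : Ioo l x -> is_derive energy x (energy_deriv x).
Proof. intros hx; exact (is_derive_Cdot _ _ x _ _ (heta'' x hx) (heta' x hx)). Qed.

Lemma energy_deriv_scaled x :
  Ioo l x -> DL * energy_deriv x =
    Re (k x) * Cdot (eta x) (eta x) + DL * Cdot (eta' x) (eta' x).
Proof.
  intros hx.
  assert (Heq : (RtoC DL * eta'' x)%C = (k x * eta x)%C).
  { rewrite <- (Cplus_0_r (k x * eta x)), <- (hode x hx); ring. }
  unfold energy_deriv; rewrite Rmult_plus_distr_l, <- Cdot_RtoC_mull, Heq, Cdot_mull.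
  reflexivity.
Qed.

Lemma energy_deriv_ge0 x : Ioo l x -> 0 <= energy_deriv x.
Proof.
  intros hx; pose proof (energy_deriv_scaled x hx).
  pose proof (Cdot_self_ge0 (eta x)); pose proof (Cdot_self_ge0 (eta' x)).
  pose proof (hk x hx). nra.
Qed.

Lemma energy_Ioo_eq0 x : Ioo l x -> energy x = 0.
Proof.
  intros hx.
  assert (Hcont : forall t, Icc l t ->
            filterlim energy (within (Icc l) (locally t)) (locally (energy t))).
  { intros t ht; apply filterlim_Cdot; [apply within_filter, locally_filter| |];
      [apply heta'_cont | apply heta_cont]; exact ht. }
  assert (E0 : energy 0 = 0) by (unfold energy; rewrite heta0; unfold Cdot; simpl; ring).
  assert (El : energy l = 0) by (unfold energy; rewrite heta'l; unfold Cdot; simpl; ring).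
  assert (I0 : Icc l 0) by (unfold Icc; lra).
  assert (Il : Icc l l) by (unfold Icc; lra).
  pose proof (nondecreasing_Ioo_between l energy hl (Hcont 0 I0) (Hcont l Il)
    (nondecreasing_of_derive_ge0 energy energy_deriv 0 l is_derive_energy energy_deriv_ge0)
    x hx).
  lra.
Qed.

Lemma eta_Ioo_eq0 x : Ioo l x -> eta x = RtoC 0 /\ eta' x = RtoC 0.
Proof.
  intros hx.
  assert (Hd : energy_deriv x = 0)
    by exact (derive_eq0_of_Ioo_eq0 energy 0 l x _ energy_Ioo_eq0 hx (is_derive_energy x hx)).
  pose proof (energy_deriv_scaled x hx) as Hs; rewrite Hd in Hs.
  pose proof (Cdot_self_ge0 (eta x)); pose proof (Cdot_self_ge0 (eta' x)).
  pose proof (hk x hx).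
  split; apply Cdot_self_eq0; nra.
Qed.

Theorem mixed_bvp_trivial : (forall x, Icc l x -> eta x = RtoC 0) /\ eta' 0 = RtoC 0.
Proof.
  assert (I0 : Icc l 0) by (unfold Icc; lra).
  split.
  - intros x hx; apply (eq_zero_at_Icc_of_Ioo l x eta hl hx (heta_cont x hx)).
    intros t ht; apply eta_Ioo_eq0, ht.
  - apply (eq_zero_at_Icc_of_Ioo l 0 eta' hl I0 (heta'_cont 0 I0)).
    intros t ht; apply eta_Ioo_eq0, ht.
Qed.

End MixedBoundaryValueProblem.

Theorem mainTheorem9 (a DL l : R) (ve : R -> R)
  (ha : 0 < a) (hDL : 0 < DL) (hl : 0 < l)
  (hve_cont : cont_on_Icc l ve)
  (hve_bd : forall x, Icc l x -> a < ve x < 2 * a)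
  (lam : Complex.C) (hlam : 0 <= Re lam) :
  (forall x, Icc l x ->
     fdenom a ve x lam <> RtoC 0 /\ 0 < Re (fval a ve x lam))
  /\
  (forall eta eta' eta'' : R -> Complex.C,
     cont_on_Icc l eta ->
     (forall x, 0 < x < l -> is_derive (K := R_AbsRing) eta x (eta' x)) ->
     cont_on_Icc l eta' ->
     (forall x, 0 < x < l -> is_derive (K := R_AbsRing) eta' x (eta'' x)) ->
     (forall x, 0 < x < l -> continuous eta'' x) ->
     (forall x, 0 < x < l ->
        (RtoC DL * eta'' x - fval a ve x lam * eta x)%C = RtoC 0) ->
     eta 0 = RtoC 0 ->
     eta' l = RtoC 0 ->
     (forall x, Icc l x -> eta x = RtoC 0) /\ eta' 0 = RtoC 0).
Proof.
  split.
  - intros x hx; split; [|exact (Re_fval_gt0 a ve x lam ha (hve_bd x hx) hlam)].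
    intros Hz; pose proof (Re_fdenom_gt0 a ve x lam ha (hve_bd x hx) hlam) as Hre.
    rewrite Hz in Hre; simpl in Hre; lra.
  -
    intros eta eta' eta'' Hc Hd Hc' Hd' _ Hode H0 Hl.
    apply (mixed_bvp_trivial DL l (fun x => fval a ve x lam) eta eta' eta''); try assumption.
    intros x [hx0 hxl]; apply Re_fval_gt0; [exact ha | apply hve_bd; unfold Icc; lra | exact hlam].
Qed.
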